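(* For $I\subseteq\{0,\dots,n\}$ and $u,v\in U^I$, $$\mathrm{ord}_p\,\theta_{0,qu-v}(\hat\lambda)\ge\frac{pu_{n+1}-v_{n+1}}{p-1}+(a-1)(\mu_I+1).$$
   Context: $p$ prime, $a\ge1$, $q=p^a$, $n\ge1$, $d\ge2$; ${\bf a}_1,\dots,{\bf a}_N\in\mathbb{N}^{n+1}$ with coordinate sums $d$, ${\bf a}_j^+=({\bf a}_j,1)\in\mathbb{N}^{n+2}$. $\mu_I$ is defined by $\lceil|I|/d\rceil=\mu_I+1$; $U^I$ is the set of $u\in\mathbb{N}^{n+2}$ with $\sum_{i=0}^nu_i=du_{n+1}$ and $u_i>0$ for $i\in I$. $\mathrm{ord}_p$ is normalized by $\mathrm{ord}_p\,p=1$. $\gamma_0$ is a zero of $\sum_{i\ge0}t^{p^i}/p^i$ with $\mathrm{ord}_p\gamma_0=1/(p-1)$; $\theta(t)=\mathrm{AH}(\gamma_0t)$ with $\mathrm{AH}(t)=\exp(\sum_{i\ge0}t^{p^i}/p^i)$. For $\lambda\in\mathbb{F}_q^N$ with Teichmüller lifting $\hat\lambda$, set $\theta(\hat\lambda,x)=\prod_{j=1}^N\theta(\hat\lambda_jx^{{\bf a}_j^+})$ and $\theta_0(\hat\lambda,x)=\prod_{i=0}^{a-1}\theta(\hat\lambda^{p^i},x^{p^i})$ (powers componentwise), and write $\theta_0(\hat\lambda,x)=\sum_w\theta_{0,w}(\hat\lambda)x^w$ ($\theta_{0,w}=0$ if $x^w$ does not occur). *)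

From HB Require Import structures.
From mathcomp Require Import all_boot all_order all_algebra all_field.
From mathcomp Require Import mpoly.

Set Implicit Arguments.
Unset Strict Implicit.
Unset Printing Implicit Defensive.
Import Order.TTheory GRing.Theory Num.Theory.
Local Open Scope ring_scope.

(* ord 0 = +oo is encoded by [ord_ge] below.  Normalized: ord p = 1.   *)
Record is_pval (K : fieldType) (p : nat) (ord : K -> rat) : Prop := {
  pval_p_neq0 : (p%:R : K) != 0;
  pval_p : ord p%:R = 1;
  pval_M : forall x y, x != 0 -> y != 0 -> ord (x * y) = ord x + ord y;
  pval_D : forall x y, x != 0 -> y != 0 -> x + y != 0 ->
             Num.min (ord x) (ord y) <= ord (x + y)
}.

(* "ord_p x >= r", with the convention ord_p 0 = +oo *)
Definition ord_ge (K : fieldType) (ord : K -> rat) (x : K) (r : rat) : Prop :=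
  x = 0 \/ r <= ord x.

Definition integral (K : fieldType) (ord : K -> rat) (x : K) : Prop :=
  ord_ge ord x 0.

Definition is_zero_of_AHlog (K : fieldType) (ord : K -> rat) (p : nat)
  (g : K) : Prop :=
  forall B : rat, exists N0 : nat, forall M : nat, (N0 <= M)%N ->
    ord_ge ord (\sum_(i < M) g ^+ (p ^ i) / (p ^ i)%:R) B.

Record is_teichmuller (K : fieldType) (ord : K -> rat) (F : finFieldType)
  (red : K -> F) (tl : F -> K) : Prop := {
  red_D : forall x y, integral ord x -> integral ord y ->
            red (x + y) = red x + red y;
  red_M : forall x y, integral ord x -> integral ord y ->
            red (x * y) = red x * red y;
  red_1 : red 1 = 1;
  red_ker : forall x, integral ord x ->
              (red x = 0 <-> (x = 0 \/ 0 < ord x));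
  tl_integral : forall c, integral ord (tl c);
  tl_red : forall c, red (tl c) = c;
  tl_fix : forall c, tl c ^+ #|F| = tl c
}.

(* Coefficients of the Artin-Hasse series AH(t) = exp(sum_i t^{p^i}/p^i):
   the coefficient of t^m of the formal exponential, computed from the
   truncation (terms with p^i > m or k > m do not contribute). *)
Definition AHcoef (p m : nat) : rat :=
  let f : {poly rat} := \sum_(i < m.+1) ((p ^ i)%:R)^-1 *: 'X^(p ^ i) in
  (\sum_(k < m.+1) (k`!%:R)^-1 *: (f ^+ k))`_m.

(* theta(t) = AH(gamma0 t) = sum_m theta_coef m t^m *)
Definition theta_coef (K : fieldType) (p : nat) (g : K) (m : nat) : K :=
  ratr (AHcoef p m) * g ^+ m.

(* a_j^+ = (a_j, 1) in N^{n+2}; the last coordinate is ord_max *)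
Definition aplus (n N : nat) (A : 'I_N -> 'I_n.+1 -> nat) (j : 'I_N)
  (k : 'I_n.+2) : nat :=
  if unlift ord_max k is Some k' then A j k' else 1%N.

(* Truncation at t-degree D of
   theta_0(lam^, x) = prod_{i<a} prod_j theta(lam^_j^{p^i} x^{p^i a_j^+}),
   as a polynomial in x_0..x_{n+1}.  All monomials of degree > D in t
   have x_{n+1}-exponent > D. *)
Definition theta0_trunc (K : fieldType) (p a n N : nat) (g : K)
  (A : 'I_N -> 'I_n.+1 -> nat) (lamh : 'I_N -> K) (D : nat)
  : {mpoly K[n.+2]} :=
  \prod_(i < a) \prod_(j < N) \sum_(m < D.+1)
     (theta_coef p g m * lamh j ^+ (p ^ i * m)) *:
       'X_[ [multinom (p ^ i * m * aplus A j k)%N | k < n.+2] ].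

(* theta_{0,w}(lam^) for w in Z^{n+2} (0 if x^w does not occur). *)
Definition theta0_coef (K : fieldType) (p a n N : nat) (g : K)
  (A : 'I_N -> 'I_n.+1 -> nat) (lamh : 'I_N -> K) (w : 'I_n.+2 -> int) : K :=
  if [forall k, 0 <= w k]
  then (theta0_trunc p a g A lamh `|w ord_max|%N)@_[multinom `|w k|%N | k < n.+2]
  else 0.

(* mu_I defined by ceil(|I|/d) = mu_I + 1 *)
Definition muI (n d : nat) (I : {set 'I_n.+1}) : int :=
  ((#|I| + d.-1) %/ d)%N%:Z - 1.

Definition inU (n d : nat) (I : {set 'I_n.+1}) (u : 'I_n.+2 -> nat) : Prop :=
  (\sum_(i < n.+1) u (widen_ord (leqnSn _) i))%N = (d * u ord_max)%N /\
  (forall i : 'I_n.+1, i \in I -> (0 < u (widen_ord (leqnSn _) i))%N).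

From HB Require Import structures.
From mathcomp Require Import all_boot all_order all_algebra all_field.
From mathcomp Require Import mpoly.
From mathcomp Require Import ring lra zify.
Import Order.TTheory GRing.Theory Num.Theory.
Local Open Scope ring_scope.

Set Implicit Arguments.
Unset Strict Implicit.
Unset Printing Implicit Defensive.

(* Expanding the product, theta_{0,qu-v}(lam) is a sum over exponent choices
   m_ij (i < a, j < N) with sum_ij p^i m_ij a_j^+ = qu - v of products of the
   AHcoef(m_ij) gamma0^m_ij lam_j^(p^i m_ij).  The Artin-Hasse coefficients are
   p-integral (Dieudonne-Dwork, from AH(x^p) = AH(x)^p exp(-px) and
   exp(-px) = 1 mod p), so such a product has ord_p >= sum m_ij / (p-1).
   For the weight, let T_i = sum_j m_ij a_j^+ and let X_l be the last
   coordinate of (sum_(i<l) p^i T_i + v) / p^l.  Then p X_(l+1) = X_l + (T_l)_(n+1),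
   X_0 = v_(n+1) and X_a = u_(n+1), so telescoping gives
   sum m_ij = p u_(n+1) - v_(n+1) + (p-1) sum_(0<l<a) X_l.  Each X_l >= mu_I + 1:
   p^l divides every coordinate of sum_(i<l) p^i T_i + v, those in I are
   positive, and by homogeneity the first n+1 of them sum to d p^l X_l. *)

(** * Truncated power series *)

Section PolyCongruence.
Variable R : fieldType.
Implicit Types (d f g h k : {poly R}).

Definition congp d f g := d %| f - g.

Lemma congp_refl d f : congp d f f.
Proof. by rewrite /congp subrr dvdp0. Qed.

Lemma congp_trans d g f h : congp d f g -> congp d g h -> congp d f h.
Proof. by rewrite /congp => dfg dgh; rewrite -(subrKA g) dvdp_add. Qed.

Lemma congpD d f g h k : congp d f g -> congp d h k -> congp d (f + h) (g + k).
Proof. by rewrite /congp => dfg dhk; rewrite opprD addrACA dvdp_add. Qed.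

Lemma congpM d f g h k : congp d f g -> congp d h k -> congp d (f * h) (g * k).
Proof.
rewrite /congp (_ : f * h - g * k = (f - g) * h + g * (h - k)); last by ring.
by move=> dfg dhk; apply: dvdp_add; [exact: dvdp_mulr | exact: dvdp_mull].
Qed.

Lemma congpZ d c f g : congp d f g -> congp d (c *: f) (c *: g).
Proof. by rewrite /congp -scalerBr -mul_polyC; apply: dvdp_mull. Qed.

Lemma congpX d f g n : congp d f g -> congp d (f ^+ n) (g ^+ n).
Proof. by rewrite /congp subrXX; apply: dvdp_mulr. Qed.

Lemma dvdp_sum d (I : Type) (r : seq I) (P : pred I) (F : I -> {poly R}) :
  (forall i, P i -> d %| F i) -> d %| \sum_(i <- r | P i) F i.
Proof. by move=> dF; apply: (big_ind (dvdp d)) => // f g; apply: dvdp_add. Qed.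

Lemma congp_sum d (I : Type) (r : seq I) (P : pred I) (F G : I -> {poly R}) :
  (forall i, P i -> congp d (F i) (G i)) ->
  congp d (\sum_(i <- r | P i) F i) (\sum_(i <- r | P i) G i).
Proof. by apply: (big_ind2 (congp d)); [apply: congp_refl | apply: congpD]. Qed.

Lemma dvdXn_coef n f i : 'X^n %| f -> (i < n)%N -> f`_i = 0.
Proof. by move=> /divpK <- lt_in; rewrite coefMXn lt_in. Qed.

Lemma congXn_coef n f g i : congp 'X^n f g -> (i < n)%N -> f`_i = g`_i.
Proof. by move=> fg lt_in; apply/eqP; rewrite -subr_eq0 -coefB (dvdXn_coef fg). Qed.

End PolyCongruence.

Lemma sum_antidiagonal (V : nmodType) K (F : nat -> nat -> V) :
  \sum_(0 <= n < K.+1) \sum_(0 <= i < n.+1) F (n - i)%N i =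
  \sum_(0 <= j < K.+1) \sum_(0 <= k < K.+1 | (j + k <= K)%N) F j k.
Proof.
rewrite (eq_big_nat _ _ (fun n le_nK => big_nat_widen _ _ _ _ _ (proj2 (andP le_nK)))).
rewrite (exchange_big_dep_nat xpredT) // [RHS](exchange_big_dep_nat xpredT) //.
apply: eq_big_nat => i _.
rewrite (eq_bigl (fun n => xpredT n && (i <= n)%N)) // -(big_nat_widenl _ _ _ _ _ (leq0n i)).
rewrite -{1}[i]add0n big_addn.
rewrite (big_nat_widen _ _ _ _ _ (leq_subr i K.+1)).
by apply: eq_big => [j | j _]; rewrite ?addnK // ltn_subRL addnC.
Qed.

Section TruncatedExp.
Variable R : numFieldType.
Implicit Types f g : {poly R}.

Definition texp K f : {poly R} := \sum_(k < K.+1) (k`!%:R)^-1 *: f ^+ k.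

Lemma texp_congp d K f g : congp d f g -> congp d (texp K f) (texp K g).
Proof. by move=> fg; apply: congp_sum => k _; apply/congpZ/congpX. Qed.

Lemma texp0 K : texp K 0 = 1.
Proof.
rewrite /texp big_ord_recl expr0 invr1 scale1r big1 ?addr0 // => k _.
by rewrite expr0n scaler0.
Qed.

Lemma texp_coef0 K f : 'X %| f -> (texp K f)`_0 = 1.
Proof.
move=> Xf; rewrite /texp coef_sum big_ord_recl expr0 invr1 scale1r coefC eqxx.
rewrite big1 ?addr0 // => k _; rewrite coefZ (dvdXn_coef (_ : 'X^(bump 0 k) %| _)) ?mulr0 //.
by rewrite dvdp_exp2r.
Qed.

Lemma texp_comp K f q : texp K f \Po q = texp K (f \Po q).
Proof.
rewrite /texp linear_sum; apply: eq_bigr => k _.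
by rewrite linearZ /= rmorphXn.
Qed.

Lemma texpD K f g : 'X %| f -> 'X %| g ->
  congp 'X^(K.+1) (texp K (f + g)) (texp K f * texp K g).
Proof.
move=> Xf Xg; pose F j k := ((j`!%:R)^-1 * (k`!%:R)^-1 : R) *: (f ^+ j * g ^+ k).
have -> : texp K (f + g) = \sum_(0 <= n < K.+1) \sum_(0 <= i < n.+1) F (n - i)%N i.
  rewrite /texp big_mkord; apply: eq_bigr => n _; rewrite exprDn scaler_sumr big_mkord.
  apply: eq_bigr => i _; rewrite /F -scaler_nat scalerA; congr (_ *: _).
  have le_in : (i <= n)%N by rewrite -ltnS.
  rewrite -(bin_fact le_in) !natrM.
  by field; rewrite !pnatr_eq0 -!lt0n !fact_gt0 bin_gt0.
have -> : texp K f * texp K g = \sum_(0 <= j < K.+1) \sum_(0 <= k < K.+1) F j k.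
  rewrite /texp mulr_suml big_mkord; apply: eq_bigr => j _.
  rewrite mulr_sumr big_mkord; apply: eq_bigr => k _.
  by rewrite /F -scalerAl -scalerAr scalerA.
rewrite sum_antidiagonal; apply: congp_sum => j _.
rewrite [X in congp _ _ X](bigID (fun k => j + k <= K)%N) /= -[X in congp _ X _]addr0.
apply: congpD; first exact: congp_refl.
rewrite /congp sub0r dvdpNr; apply: dvdp_sum => k; rewrite -ltnNge => lt_Kjk.
rewrite /F -mul_polyC dvdp_mull // (dvdp_trans (dvdp_exp2l _ lt_Kjk)) // exprD.
by rewrite dvdp_mul // dvdp_exp2r.
Qed.

Lemma texpMn K f n : 'X %| f -> congp 'X^(K.+1) (texp K (f *+ n)) (texp K f ^+ n).
Proof.
move=> Xf; elim: n => [|n IHn]; first by rewrite mulr0n expr0 texp0 congp_refl.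
have Xfn : 'X %| f *+ n by rewrite -mulr_natr dvdp_mulr.
rewrite mulrS [texp K f ^+ _]exprS; apply: congp_trans (texpD K Xf Xfn) _.
exact: congpM (congp_refl _ _) IHn.
Qed.

End TruncatedExp.

Lemma exprDn_sub_ends (R : comPzRingType) (x y : R) n :
  (x + y) ^+ n.+1 - x ^+ n.+1 - y ^+ n.+1 =
  \sum_(i < n) x ^+ (n - i) * y ^+ i.+1 *+ 'C(n.+1, i.+1).
Proof.
have cancel_ends (a s b : R) : a + s + b - a - b = s by ring.
rewrite exprDn big_ord_recr big_ord_recl /= subnn subn0 !bin0 binn !expr0.
rewrite mulr1 mul1r !mulr1n cancel_ends.
by apply: eq_bigr => i _; rewrite subSS.
Qed.

Lemma coef_exprM_take (R : comNzRingType) (A G : {poly R}) m n :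
  A`_0 = 1 -> (0 < m)%N ->
  (A ^+ n * G)`_m = (take_poly m A ^+ n * G)`_m + A`_m * G`_0 *+ n.
Proof.
move=> A0 m_gt0; set P := take_poly m A; set S := \sum_(i < n) A ^+ (n.-1 - i) * P ^+ i.
have P0 : P.[0] = 1 by rewrite horner_coef0 coef_take_poly m_gt0.
have S0 : S`_0 = n%:R.
  rewrite -horner_coef0 horner_sum (eq_bigr (fun _ => 1)) ?sumr_const ?card_ord //.
  by move=> i _; rewrite hornerM !horner_exp P0 horner_coef0 A0 !expr1n mulr1.
have eA : A - P = drop_poly m A * 'X^m.
  by rewrite -{1}(poly_take_drop m A) addrAC subrr add0r.
rewrite -[A ^+ n](subrK (P ^+ n)) mulrDl coefD addrC; congr (_ + _).
rewrite subrXX -/S eA -!mulrA mulrCA coefXnM ltnn subnn !coef0M S0.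
by rewrite coef_drop_poly add0n mulrCA mulr_natl.
Qed.

(** * p-integral rationals and the Artin-Hasse series *)

Lemma denq_frac_dvd (z b : int) : b != 0 -> (denq (z%:~R / b%:~R) %| b)%Z.
Proof.
move=> b0; set r := z%:~R / b%:~R.
have e : numq r * b = z * denq r.
  by apply: (@intr_inj rat); rewrite !intrM numqE /r; field; rewrite intr_eq0.
have : (denq r %| numq r * b)%Z by rewrite e dvdz_mull.
by rewrite Gauss_dvdzr // coprimezE coprime_sym coprime_num_den.
Qed.

Lemma sum_divn_expn_le b n J : (1 < b)%N ->
  (\sum_(1 <= k < J.+1) n %/ b ^ k <= n.-1)%N.
Proof.
move=> b_gt1; elim: J n => [|J IHJ] n; first by rewrite big_geq.
rewrite big_ltn // expn1 big_add1 /=.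
under eq_big_nat => k _ do rewrite expnS divnMA.
have := IHJ (n %/ b)%N; have := leq_divM n b.
have : (2 * (n %/ b) <= n %/ b * b)%N by rewrite mulnC leq_mul2l b_gt1 orbT.
lia.
Qed.

Lemma logn_fact_lt p n : prime p -> (0 < n)%N -> (logn p n`! < n)%N.
Proof.
move=> p_pr n_gt0; rewrite logn_fact //.
by rewrite (leq_ltn_trans (sum_divn_expn_le _ _ (prime_gt1 p_pr))) // prednK.
Qed.

Definition pintegral (p : nat) : {pred rat} := fun r => coprime p `|denq r|.

Section PIntegral.
Variable p : nat.

Lemma pintegral_frac (z b : int) : coprime p `|b| -> z%:~R / b%:~R \in pintegral p.
Proof.
have [-> _|b0 cpb] := eqVneq b 0.
  by rewrite invr0 mulr0 unfold_in /pintegral coprimen1.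
by rewrite unfold_in /pintegral (coprime_dvdr _ cpb) // -dvdzE denq_frac_dvd.
Qed.

Fact pintegral_subring : subring_closed (pintegral p).
Proof.
have fracZ x y z : x \in pintegral p -> y \in pintegral p ->
    z%:~R / (denq x * denq y)%:~R \in pintegral p.
  by move=> xZ yZ; apply: pintegral_frac; rewrite abszM coprimeMr; apply/andP.
have den0 x : (denq x)%:~R != 0 :> rat by rewrite intr_eq0 denq_neq0.
split=> [|x y xZ yZ|x y xZ yZ]; first by rewrite unfold_in /pintegral coprimen1.
  suff -> : x - y = (numq x * denq y - numq y * denq x)%:~R / (denq x * denq y)%:~R.
    exact: fracZ.
  by rewrite -{1}[x]divq_num_den -{1}[y]divq_num_den intrB !intrM; field; rewrite !den0.
suff -> : x * y = (numq x * numq y)%:~R / (denq x * denq y)%:~R by exact: fracZ.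
by rewrite -{1}[x]divq_num_den -{1}[y]divq_num_den !intrM; field; rewrite !den0.
Qed.

HB.instance Definition _ :=
  GRing.isSubringClosed.Build rat (pintegral p) pintegral_subring.

Hypothesis p_pr : prime p.

Lemma dvdz_Fermat (z : int) : (p %| z ^+ p - z)%Z.
Proof.
rewrite (dvdz_pcharf (pchar_Fp p_pr)) rmorphB rmorphXn /=.
by have := @expf_card 'F_p z%:~R; rewrite card_Fp // => ->; rewrite subrr.
Qed.

Lemma pintegral_Fermat x : x \in pintegral p -> (x ^+ p - x) / p%:R \in pintegral p.
Proof.
move=> xZ; set n := numq x; set b := denq x.
(* (n/b)^p - n/b = (b n^p - n b^p) / b^(p+1), whose numerator is the one below. *)
have /dvdzP[k ek] : (p %| b * (n ^+ p - n) - n * (b ^+ p - b))%Z.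
  by rewrite rpredB ?dvdz_mull ?dvdz_Fermat.
have p0 : p%:R != 0 :> rat by rewrite pnatr_eq0 -lt0n prime_gt0.
have b0 : b%:~R != 0 :> rat by rewrite intr_eq0 denq_neq0.
have -> : (x ^+ p - x) / p%:R = k%:~R / (b ^+ p.+1)%:~R.
  have -> : k%:~R = (b%:~R * n%:~R ^+ p - n%:~R * b%:~R ^+ p) / p%:R :> rat.
    apply: (mulIf p0); rewrite divfK // -[p%:R]/(p%:Z)%:~R -intrM -ek.
    by rewrite !(intrB, intrM, rmorphXn); ring.
  rewrite -{1 2}[x]divq_num_den -/n -/b exprS intrM rmorphXn /= expr_div_n.
  by field; rewrite b0 p0 expf_neq0.
by apply: pintegral_frac; rewrite abszX coprimeXr.
Qed.

Lemma pintegral_pfact k : (p ^ k)%:R / (k.+1)`!%:R \in pintegral p.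
Proof.
have [b cpb ekf] := pfactor_coprime p_pr (fact_gt0 k.+1).
have le_lk : (logn p (k.+1)`! <= k)%N by rewrite -ltnS logn_fact_lt.
set l := logn p (k.+1)`! in ekf le_lk *.
rewrite ekf -(subnK le_lk) expnD !natrM [b%:R * _]mulrC invfM mulrA mulfK; last first.
  by rewrite pnatr_eq0 -lt0n expn_gt0 prime_gt0.
by rewrite !pmulrn pintegral_frac.
Qed.

Definition pdivisible : {pred {poly rat}} :=
  fun P => (p%:R)^-1 *: P \in polyOver (pintegral p).

Fact pdivisible_zmod : zmod_closed pdivisible.
Proof.
split=> [|P Q PZ QZ]; first by rewrite unfold_in /pdivisible scaler0 rpred0.
by rewrite unfold_in /pdivisible scalerBr rpredB.
Qed.

HB.instance Definition _ :=
  GRing.isZmodClosed.Build {poly rat} pdivisible pdivisible_zmod.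

Lemma pdivisibleMl P Q :
  P \in polyOver (pintegral p) -> Q \in pdivisible -> P * Q \in pdivisible.
Proof. by move=> PZ QZ; rewrite unfold_in /pdivisible scalerAr rpredM. Qed.

Lemma pdivisible_scale P : P \in polyOver (pintegral p) -> p%:R *: P \in pdivisible.
Proof.
move=> PZ; rewrite unfold_in /pdivisible scalerA mulVf ?scale1r //.
by rewrite pnatr_eq0 -lt0n prime_gt0.
Qed.

Lemma pdivisible_binom A B :
  A \in polyOver (pintegral p) -> B \in polyOver (pintegral p) ->
  (A + B) ^+ p - A ^+ p - B ^+ p \in pdivisible.
Proof.
move=> AZ BZ; rewrite -(prednK (prime_gt0 p_pr)) exprDn_sub_ends rpred_sum // => i _.
have /dvdnP[c ->] : (p %| 'C(p.-1.+1, i.+1))%N.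
  by rewrite prednK ?prime_gt0 // prime_dvd_bin //= -ltn_predRL ltn_ord.
by rewrite mulrnA -scaler_nat pdivisible_scale // rpredMn // rpredM ?rpredX.
Qed.

Lemma pdivisible_Frobenius P :
  P \in polyOver (pintegral p) -> P ^+ p - (P \Po 'X^p) \in pdivisible.
Proof.
elim/poly_ind: P => [_|Q c IHQ /polyOverP QcZ].
  by rewrite expr0n gtn_eqF ?prime_gt0 // comp_poly0 subrr rpred0.
have cZ : c \in pintegral p by have := QcZ 0%N; rewrite coefD coefMX coefC eqxx add0r.
have QZ : Q \in polyOver (pintegral p).
  by apply/polyOverP => i; have := QcZ i.+1; rewrite coefD coefMX coefC addr0.
rewrite comp_poly_MXaddC.
have -> : (Q * 'X + c%:P) ^+ p - ((Q \Po 'X^p) * 'X^p + c%:P) =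
    ((Q * 'X + c%:P) ^+ p - (Q * 'X) ^+ p - c%:P ^+ p)
    + 'X^p * (Q ^+ p - (Q \Po 'X^p)) + (c ^+ p - c)%:P.
  by rewrite exprMn polyCB rmorphXn /=; ring.
rewrite rpredD ?(rpredD (pdivisible_binom _ _)) ?pdivisibleMl ?polyOverXn ?IHQ //.
  - by rewrite rpredM ?polyOverX.
  - by rewrite polyOverC.
by rewrite unfold_in /pdivisible -mul_polyC -polyCM polyOverC mulrC pintegral_Fermat.
Qed.

(* One direction of the Dieudonne-Dwork criterion. *)
Lemma dwork_pintegral (A G : {poly rat}) M :
  A`_0 = 1 -> G`_0 = 1 -> G - 1 \in pdivisible ->
  congp 'X^(M.+1) (A \Po 'X^p) (A ^+ p * G) ->
  forall m, (m <= M)%N -> A`_m \in pintegral p.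
Proof.
move=> A0 G0 G1 AG; elim/ltn_ind => -[_ _|m IHm le_mM]; first by rewrite A0 rpred1.
set P := take_poly m.+1 A.
have PZ : P \in polyOver (pintegral p).
  apply/polyOverP => i; rewrite coef_take_poly; case: ifP => [lt_im|_]; last exact: rpred0.
  by rewrite IHm // (leq_trans _ le_mM) // ltnW.
have AP : (A \Po 'X^p)`_m.+1 = (P \Po 'X^p)`_m.+1.
  rewrite !coef_comp_poly_Xn ?prime_gt0 //; case: ifP => // _.
  by rewrite coef_take_poly ltn_Pdiv ?prime_gt1.
have := congXn_coef AG (le_mM : m.+1 < M.+1)%N; rewrite AP coef_exprM_take // G0 mulr1 => eP.
have -> : A`_m.+1 =
    - ((p%:R)^-1 *: (P ^+ p - (P \Po 'X^p) + P ^+ p * (G - 1)))`_m.+1.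
  rewrite coefZ coefD coefB mulrBr mulr1 coefB eP.
  by field; rewrite pnatr_eq0 -lt0n prime_gt0.
have DZ : P ^+ p - (P \Po 'X^p) + P ^+ p * (G - 1) \in pdivisible.
  by rewrite rpredD ?pdivisible_Frobenius ?pdivisibleMl ?rpredX.
by rewrite rpredN (polyOverP DZ).
Qed.

Definition AHlog M : {poly rat} := \sum_(i < M.+1) ((p ^ i)%:R)^-1 *: 'X^(p ^ i).

Lemma X_dvd_AHlog M : 'X %| AHlog M.
Proof.
apply: dvdp_sum => i _; rewrite -mul_polyC dvdp_mull // -{1}(expr1 'X) dvdp_exp2l //.
by rewrite expn_gt0 prime_gt0.
Qed.

Lemma AHlog_comp M : AHlog M \Po 'X^p = p%:R *: (AHlog M.+1 - 'X).
Proof.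
rewrite [AHlog M.+1]/AHlog big_ord_recl expn0 invr1 scale1r expr1 (addrC 'X) addrK.
rewrite linear_sum scaler_sumr; apply: eq_bigr => i _ /=.
rewrite linearZ /= comp_Xn_poly -exprM scalerA expnSr natrM invfM mulrCA.
by rewrite divff ?mulr1 1?mulnC // pnatr_eq0 -lt0n prime_gt0.
Qed.

Lemma AHlog_congp M : congp 'X^(M.+1) (AHlog M.+1) (AHlog M).
Proof.
rewrite /congp [AHlog M.+1]/AHlog big_ord_recr /= addrC addrK -mul_polyC dvdp_mull //.
by rewrite dvdp_exp2l // ltnW // ltn_expl // prime_gt1.
Qed.

Lemma texp_AHlog_comp M :
  congp 'X^(M.+1) (texp M (AHlog M) \Po 'X^p)
                  (texp M (AHlog M) ^+ p * texp M (- (p%:R *: 'X))).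
Proof.
have X_dvd_pX : 'X %| - (p%:R *: 'X : {poly rat}) by rewrite dvdpNr -mul_polyC dvdp_mulIr.
rewrite texp_comp AHlog_comp.
apply: (@congp_trans _ _ (texp M (AHlog M *+ p + - (p%:R *: 'X)))).
  rewrite -scaler_nat -scalerBr; apply/texp_congp/congpZ/congpD; last exact: congp_refl.
  exact: AHlog_congp.
apply: congp_trans (texpD M _ X_dvd_pX) _; first by rewrite -mulr_natr dvdp_mulr ?X_dvd_AHlog.
exact/congpM/congp_refl/texpMn/X_dvd_AHlog.
Qed.

Lemma texp_pX_pdivisible M : texp M (- (p%:R *: 'X)) - 1 \in pdivisible.
Proof.
rewrite /texp big_ord_recl expr0 invr1 scale1r addrC addKr rpred_sum // => i _.
have -> : ((i.+1)`!%:R)^-1 *: (- (p%:R *: 'X)) ^+ i.+1 =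
    p%:R *: (((-1) ^+ i.+1 * ((p ^ i)%:R / (i.+1)`!%:R)) *: 'X^(i.+1)) :> {poly rat}.
  rewrite -scaleNr exprZn !scalerA; congr (_ *: _).
  rewrite -mulN1r exprMn natrX [p%:R ^+ i.+1]exprS; field.
  by rewrite pnatr_eq0 -lt0n fact_gt0.
by rewrite pdivisible_scale // polyOverZ ?polyOverXn // rpredM ?rpredX ?rpredN1 ?pintegral_pfact.
Qed.

(* [AHcoef p m] is by definition the m-th coefficient of [texp m (AHlog m)]. *)
Lemma AHcoef_pintegral m : AHcoef p m \in pintegral p.
Proof.
apply: (dwork_pintegral _ _ _ (texp_AHlog_comp m)) => //.
- exact/texp_coef0/X_dvd_AHlog.
- by apply/texp_coef0; rewrite dvdpNr -mul_polyC dvdp_mulIr.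
- exact: texp_pX_pdivisible.
Qed.

End PIntegral.

(** * The valuation *)

Section Valuation.
Variables (K : fieldType) (p : nat) (ord : K -> rat).
Hypothesis ord_pval : is_pval p ord.

Lemma ord1 : ord 1 = 0.
Proof. by have := pval_M ord_pval (oner_neq0 K) (oner_neq0 K); rewrite mulr1; lra. Qed.

Lemma ordV x : x != 0 -> ord x^-1 = - ord x.
Proof.
move=> x0; have := pval_M ord_pval x0 (invr_neq0 x0).
by rewrite divff // ord1; lra.
Qed.

Lemma ord_ge_le x r s : s <= r -> ord_ge ord x r -> ord_ge ord x s.
Proof. by move=> le_sr [->|le_rx]; [left | right; apply: le_trans le_rx]. Qed.

Lemma ord_geD x y r : ord_ge ord x r -> ord_ge ord y r -> ord_ge ord (x + y) r.
Proof.
move=> [->|rx]; first by rewrite add0r.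
move=> [->|ry]; first by rewrite addr0; right.
have [x0|x0] := eqVneq x 0; first by rewrite x0 add0r; right.
have [y0|y0] := eqVneq y 0; first by rewrite y0 addr0; right.
have [xy0|xy0] := eqVneq (x + y) 0; first by left.
by right; apply: le_trans (pval_D ord_pval x0 y0 xy0); rewrite le_min rx ry.
Qed.

Lemma ord_geM x y r s : ord_ge ord x r -> ord_ge ord y s -> ord_ge ord (x * y) (r + s).
Proof.
move=> [->|rx]; first by rewrite mul0r; left.
move=> [->|sy]; first by rewrite mulr0; left.
have [x0|x0] := eqVneq x 0; first by rewrite x0 mul0r; left.
have [y0|y0] := eqVneq y 0; first by rewrite y0 mulr0; left.
by right; rewrite (pval_M ord_pval x0 y0) lerD.
Qed.

Lemma ord_geN x r : ord_ge ord x r -> ord_ge ord (- x) r.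
Proof.
have N10 : (-1 : K) != 0 by rewrite oppr_eq0 oner_neq0.
have ordN1 : ord (-1) = 0.
  by have := pval_M ord_pval N10 N10; rewrite mulrNN mulr1 ord1; lra.
by move=> xr; rewrite -mulN1r -[r]add0r; apply: ord_geM xr; right; rewrite ordN1.
Qed.

Lemma ord_geX x r n : ord_ge ord x r -> ord_ge ord (x ^+ n) (r *+ n).
Proof.
move=> xr; elim: n => [|n IHn]; first by right; rewrite expr0 ord1.
by rewrite exprS mulrS; apply: ord_geM.
Qed.

Lemma ord_ge_sum (I : Type) (s : seq I) (P : pred I) (F : I -> K) r :
  (forall i, P i -> ord_ge ord (F i) r) -> ord_ge ord (\sum_(i <- s | P i) F i) r.
Proof. by apply: (big_ind (ord_ge ord ^~ r)); [left | move=> x y; apply: ord_geD]. Qed.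

Lemma ord_ge_prod (I : Type) (s : seq I) (P : pred I) (F : I -> K) (G : I -> rat) :
  (forall i, P i -> ord_ge ord (F i) (G i)) ->
  ord_ge ord (\prod_(i <- s | P i) F i) (\sum_(i <- s | P i) G i).
Proof.
apply: (big_ind2 (ord_ge ord)); first by right; rewrite ord1.
by move=> x1 x2 r1 r2; apply: ord_geM.
Qed.

Lemma ord_ge_nat n : ord_ge ord n%:R 0.
Proof.
elim: n => [|n IHn]; first by left.
by rewrite -natr1; apply: ord_geD IHn _; right; rewrite ord1.
Qed.

Lemma ord_ge_int z : ord_ge ord z%:~R 0.
Proof.
by case: z => n; [rewrite -pmulrn | rewrite NegzE rmorphN /= -pmulrn; apply: ord_geN];
  apply: ord_ge_nat.
Qed.

Lemma ord_nat_coprime_contra b r : coprime p b -> 0 < r -> ~ ord_ge ord b%:R r.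
Proof.
have p_gt0 : (0 < p)%N by rewrite lt0n; apply: contra_neq (pval_p_neq0 ord_pval) => ->.
move=> cpb r_gt0 br; have [x _] := Bezoutl b p_gt0; rewrite (eqP cpb) => /dvdnP[k ek].
have e1 : 1 = k%:R * p%:R - x%:R * b%:R :> K.
  by rewrite -natrM -ek natrD natrM addrK.
have : ord_ge ord (1 : K) (Num.min 1 r).
  rewrite e1; apply: ord_geD; last apply: ord_geN.
    by rewrite -[Num.min _ _]add0r; apply: ord_geM (ord_ge_nat k) _; right;
       rewrite (pval_p ord_pval) ge_min lexx.
  by rewrite -[Num.min _ _]add0r; apply: ord_geM (ord_ge_nat x) (ord_ge_le _ br);
     rewrite ge_min lexx orbT.
case=> [/eqP|]; first by rewrite oner_eq0.
by rewrite ord1 ge_min ler10 /= leNgt r_gt0.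
Qed.

Lemma ord_nat_coprime b : coprime p b -> b%:R != 0 :> K /\ ord b%:R = 0.
Proof.
move=> cpb; have b0 : b%:R != 0 :> K.
  by apply/eqP => b0; apply: (ord_nat_coprime_contra cpb ltr01); left.
split => //; case: (ord_ge_nat b) => [/eqP|ge0_b]; first by rewrite (negPf b0).
apply/eqP; rewrite eq_le ge0_b andbT leNgt; apply/negP => b_gt0.
by apply: (ord_nat_coprime_contra cpb b_gt0); right.
Qed.

Lemma ord_ge_ratr r : r \in pintegral p -> ord_ge ord (ratr r : K) 0.
Proof.
move=> rZ; have [b0 ordb] := ord_nat_coprime rZ.
rewrite /ratr -absz_denq -pmulrn -[0]addr0.
by apply: ord_geM (ord_ge_int _) _; right; rewrite ordV // ordb oppr0.
Qed.

End Valuation.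

(** * The weight of an exponent choice *)

Section Layers.
Variables (p n d a : nat) (I : {set 'I_n.+1}) (u v : 'I_n.+2 -> nat).
Variable T : nat -> 'I_n.+2 -> nat.
Hypotheses (p_gt0 : (0 < p)%N) (d_gt0 : (0 < d)%N) (v_in : inU d I v).
Hypothesis T_homog :
  forall i, (\sum_(k < n.+1) T i (widen_ord (leqnSn _) k))%N = (d * T i ord_max)%N.
Hypothesis T_digits :
  forall k, (\sum_(i < a) p ^ i * T i k + v k)%N = (p ^ a * u k)%N.

Local Notation S l k := (\sum_(i < l) p ^ i * T i k)%N.
Local Notation X l := ((S l ord_max + v ord_max) %/ p ^ l)%N.

Lemma partial_digits_dvd l k : (l <= a)%N -> (p ^ l %| S l k + v k)%N.
Proof.
move=> le_la; have : (p ^ l %| S a k + v k)%N by rewrite T_digits dvdn_mulr // dvdn_exp2l.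
rewrite -!(big_mkord xpredT (fun i => p ^ i * T i k)%N).
rewrite (big_cat_nat (leq0n l) le_la) /= addnAC dvdn_addl //.
by rewrite big_nat_cond dvdn_sum // => i /andP[/andP[le_li _] _]; rewrite dvdn_mulr ?dvdn_exp2l.
Qed.

Lemma partial_digits_homog l :
  (\sum_(k < n.+1) S l (widen_ord (leqnSn _) k))%N = (d * S l ord_max)%N.
Proof.
rewrite exchange_big big_distrr; apply: eq_bigr => i _ /=.
by rewrite -big_distrr T_homog mulnCA.
Qed.

Lemma layer_lower_bound l : (l <= a)%N -> ((#|I| + d.-1) %/ d <= X l)%N.
Proof.
move=> le_la; have [c ec] := dvdnP (partial_digits_dvd ord_max le_la).
have pl_gt0 : (0 < p ^ l)%N by rewrite expn_gt0 p_gt0.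
rewrite ec mulnK //.
have : (#|I| * p ^ l <= d * (c * p ^ l))%N.
  rewrite -ec mulnDr -partial_digits_homog -(proj1 v_in) -big_split /=.
  rewrite (bigID (mem I)) /= -sum_nat_const (leq_trans _ (leq_addr _ _)) //.
  apply: leq_sum => k kI; apply: dvdn_leq; last exact: partial_digits_dvd.
  by rewrite addn_gt0 (proj2 v_in k kI) orbT.
rewrite mulnA leq_pmul2r // => le_Idc.
by rewrite -ltnS ltn_divLR // mulSn mulnC; move: d_gt0; lia.
Qed.

Lemma layer_step l : (l < a)%N -> (T l ord_max + X l)%N = (p * X l.+1)%N.
Proof.
move=> lt_la; have pl_gt0 : (0 < p ^ l)%N by rewrite expn_gt0 p_gt0.
have XpE m : (m <= a)%N -> (X m * p ^ m)%N = (S m ord_max + v ord_max)%N.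
  by move=> le_ma; rewrite (divnK (partial_digits_dvd ord_max le_ma)).
apply/eqP; rewrite -(eqn_pmul2r pl_gt0) mulnDl (XpE _ (ltnW lt_la)).
rewrite [(p * _)%N]mulnC -mulnA -expnS (XpE _ lt_la) big_ord_recr.
by rewrite /= addnAC addnC mulnC.
Qed.

Lemma layers_bound : (0 < a)%N ->
  (p * u ord_max + p.-1 * (a.-1 * ((#|I| + d.-1) %/ d)) <=
     \sum_(i < a) T i ord_max + v ord_max)%N.
Proof.
move=> a_gt0; set C := ((#|I| + d.-1) %/ d)%N.
have X0 : X 0 = v ord_max by rewrite big_ord0 expn0 divn1.
have Xa : X a = u ord_max by rewrite T_digits mulKn // expn_gt0 p_gt0.
have steps : (\sum_(i < a) (T i ord_max + X i) = p * \sum_(i < a) X i.+1)%N.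
  by rewrite big_distrr; apply: eq_bigr => i _; rewrite layer_step.
have bound : (a.-1 * C <= \sum_(i < a.-1) X i.+1)%N.
  rewrite -[k in (k * _)%N]card_ord -sum_nat_const; apply: leq_sum => i _.
  exact/layer_lower_bound/(leq_trans (ltn_ord i) (leq_pred a)).
have sumX : (\sum_(i < a) X i = X 0 + \sum_(i < a.-1) X i.+1)%N.
  by rewrite -[in LHS](prednK a_gt0) big_ord_recl.
have sumXS : (\sum_(i < a) X i.+1 = \sum_(i < a.-1) X i.+1 + X a)%N.
  by rewrite -[in LHS](prednK a_gt0) big_ord_recr /= prednK.
move: steps (leq_mul (leqnn p.-1) bound); rewrite big_split sumX sumXS X0 Xa /=.
move: (\sum_(i < a) _)%N (\sum_(i < a.-1) _)%N => sT sX.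
rewrite -(prednK p_gt0); move: p.-1 => q.
by rewrite !mulSn !mulnDr; lia.
Qed.

End Layers.

Lemma mcoeff_prod_sum (R : comNzRingType) k (I J : finType)
    (c : I -> J -> R) (e : I -> J -> 'X_{1.. k}) (w : 'X_{1.. k}) :
  (\prod_i \sum_j (c i j *: 'X_[e i j] : {mpoly R[k]}))@_w =
  \sum_(f : {ffun I -> J} | (\sum_i e i (f i))%MM == w) \prod_i c i (f i).
Proof.
rewrite bigA_distr_bigA raddf_sum [RHS]big_mkcond /=; apply: eq_bigr => f _.
rewrite scaler_prod -(big_morph _ (@mpolyXD _ _) (@mpolyX0 _ _)) mcoeffZ mcoeffX.
by case: eqP; rewrite ?mulr1 ?mulr0.
Qed.

Lemma ord_ge_theta_coef (K : fieldType) p (ord : K -> rat) g y m k :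
  prime p -> is_pval p ord -> ord g = ((p.-1)%:R)^-1 -> integral ord y ->
  ord_ge ord (theta_coef p g m * y ^+ k) (m%:R / (p.-1)%:R).
Proof.
move=> p_pr ord_pval ord_g y_int.
have := ord_geM ord_pval (ord_geM ord_pval (ord_ge_ratr ord_pval (AHcoef_pintegral p_pr m))
   (ord_geX ord_pval m (or_intror (lexx (ord g)) : ord_ge ord g _)))
   (ord_geX ord_pval k y_int).
by rewrite mul0rn add0r addr0 ord_g mulr_natl mulrC.
Qed.

Lemma aplus_last n N (A : 'I_N -> 'I_n.+1 -> nat) j : aplus A j ord_max = 1%N.
Proof. by rewrite /aplus unlift_none. Qed.

Lemma aplus_widen n N (A : 'I_N -> 'I_n.+1 -> nat) j (k : 'I_n.+1) :
  aplus A j (widen_ord (leqnSn _) k) = A j k.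
Proof.
have -> : widen_ord (leqnSn _) k = lift ord_max k.
  by apply: val_inj; rewrite /= /bump leqNgt ltn_ord.
by rewrite /aplus liftK.
Qed.

Section Theta0Exponents.
Variables (p a n d N : nat) (A : 'I_N -> 'I_n.+1 -> nat).
Variables (I : {set 'I_n.+1}) (u v : 'I_n.+2 -> nat).
Hypotheses (p_gt0 : (0 < p)%N) (a_gt0 : (0 < a)%N) (d_gt0 : (0 < d)%N).
Hypotheses (A_deg : forall j, (\sum_(i < n.+1) A j i)%N = d) (v_in : inU d I v).

Lemma theta0_weight_bound (g : 'I_a * 'I_N -> nat) :
  (forall k, \sum_(ij : 'I_a * 'I_N) p ^ ij.1 * g ij * aplus A ij.2 k + v k
     = p ^ a * u k)%N ->
  (p * u ord_max + p.-1 * (a.-1 * ((#|I| + d.-1) %/ d)) <=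
     \sum_ij g ij + v ord_max)%N.
Proof.
move=> g_digits; pose i0 : 'I_a := Ordinal a_gt0.
have sum_pair (F : 'I_a * 'I_N -> nat) :
    (\sum_ij F ij = \sum_(i < a) \sum_(j < N) F (i, j))%N.
  by rewrite pair_bigA; apply: eq_bigr => -[].
pose T i k := (\sum_(j < N) g (insubd i0 i, j) * aplus A j k)%N.
have TE (i : 'I_a) k : T i k = (\sum_(j < N) g (i, j) * aplus A j k)%N.
  by rewrite /T valKd.
have T_last (i : 'I_a) : T i ord_max = (\sum_(j < N) g (i, j))%N.
  by rewrite TE; apply: eq_bigr => j _; rewrite aplus_last muln1.
rewrite sum_pair (eq_bigr (fun i : 'I_a => T i ord_max)) => [|i _]; last by rewrite T_last.
apply: (@layers_bound p n d a I u v T p_gt0 d_gt0 v_in).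
- move=> i; rewrite exchange_big big_distrr /=; apply: eq_bigr => j _.
  under eq_bigr => k _ do rewrite aplus_widen.
  by rewrite -big_distrr A_deg aplus_last muln1 mulnC.
- move=> k; rewrite -g_digits sum_pair; congr (_ + _)%N.
  by apply: eq_bigr => i _; rewrite TE big_distrr; apply: eq_bigr => j _; rewrite /= mulnA.
- exact: a_gt0.
Qed.

End Theta0Exponents.

Lemma ler_div_pred_weight (p b C s u v : nat) : (1 < p)%N ->
  (p * u + p.-1 * (b * C) <= s + v)%N ->
  ((p * u)%N%:~R - v%:~R) / (p.-1)%:R + b%:R * C%:R <= s%:R / (p.-1)%:R :> rat.
Proof.
move=> p_gt1; rewrite -(ler_nat rat) !natrD !natrM => le_sv.
have q_gt0 : 0 < (p.-1)%:R :> rat by rewrite ltr0n -ltnS prednK // ltnW.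
rewrite -(ler_pM2r q_gt0) mulrDl !divfK ?gt_eqF // -!pmulrn natrM.
by move: le_sv; lra.
Qed.

Theorem corollary3p26
  (p a n d N : nat) (hp : prime p) (ha : (1 <= a)%N) (hn : (1 <= n)%N)
  (hd : (2 <= d)%N)
  (A : 'I_N -> 'I_n.+1 -> nat)
  (hA : forall j, (\sum_(i < n.+1) A j i)%N = d)
  (K : fieldType) (ord : K -> rat) (hord : is_pval p ord)
  (gamma0 : K) (hg0 : is_zero_of_AHlog ord p gamma0)
  (hg0ord : gamma0 != 0 /\ ord gamma0 = ((p.-1)%:R)^-1)
  (F : finFieldType) (hF : #|F| = (p ^ a)%N)
  (red : K -> F) (tl : F -> K) (htl : is_teichmuller ord red tl)
  (lam : 'I_N -> F)
  (I : {set 'I_n.+1}) (u v : 'I_n.+2 -> nat)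
  (hu : inU d I u) (hv : inU d I v) :
  ord_ge ord
    (theta0_coef p a gamma0 A (fun j => tl (lam j))
       (fun k => ((p ^ a * u k)%N)%:Z - (v k)%:Z))
    ((((p * u ord_max)%N)%:~R - (v ord_max)%:~R) / (p.-1)%:R
       + (a.-1)%:R * (muI d I + 1)%:~R).
Proof.
rewrite /theta0_coef; case: ifP => [/forallP w_ge0|_]; last by left.
have le_vu k : (v k <= p ^ a * u k)%N by have := w_ge0 k; rewrite subr_ge0 lez_nat.
have absw k : `|(p ^ a * u k)%N%:Z - (v k)%:Z|%N = (p ^ a * u k - v k)%N.
  by rewrite subzn.
rewrite (_ : [multinom _ | k < n.+2] = [multinom (p ^ a * u k - v k)%N | k < n.+2]); last first.
  by apply/mnmP => k; rewrite !mnmE absw.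
rewrite /theta0_trunc pair_bigA mcoeff_prod_sum; apply: (ord_ge_sum hord) => f /eqP f_exp.
apply: (ord_ge_le _ (ord_ge_prod hord _ (fun ij _ =>
  ord_ge_theta_coef _ _ hp hord hg0ord.2 (tl_integral htl (lam ij.2))))).
have f_digits (k : 'I_n.+2) :
    (\sum_(ij : 'I_a * 'I_N) p ^ ij.1 * f ij * aplus A ij.2 k + v k = p ^ a * u k)%N.
  have := congr1 (fun m : 'X_{1.. n.+2} => m k) f_exp; rewrite /= mnm_sumE mnmE => ek.
  by rewrite -(subnK (le_vu k)) -ek; congr (_ + _)%N; apply: eq_bigr => ij _; rewrite mnmE.
have := theta0_weight_bound (prime_gt0 hp) ha (ltnW hd) hA hv f_digits.
rewrite -mulr_suml -natr_sum (_ : muI d I + 1 = ((#|I| + d.-1) %/ d)%N) ?subrK //.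
exact/ler_div_pred_weight/prime_gt1.
Qed.
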